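(* Let $k$ be a field, $n\ge1$, and let $Q_H$ be the quiver with vertices $x_1,\ldots,x_{n+1},y_1,\ldots,y_n$ and arrows $r_i:x_i\to y_i$, $l_i:y_i\to x_{i+1}$, $a_i:x_i\to x_{i+1}$ ($i=1,\ldots,n$); put $A_i=r_il_i$. Let $1=c_1<c_2<\cdots<c_{s+1}=n+1$ with $n_k:=c_{k+1}-c_k\ge2$ for all $k=1,\ldots,s$. For $1\le k\le s$ and $1\le i\le n_k$ write $a^k_i=a_{c_k+i-1}$, $A^k_i=A_{c_k+i-1}$ and $W^k=a^k_1\cdots a^k_{n_k}+A^k_1\cdots A^k_{n_k}$. Let $\varphi^k_i:kQ_H\to kQ_H$ be the algebra automorphism with $\varphi^k_i(a^k_i)=a^k_i+A^k_i$ and fixing all other arrows and all stationary paths; let $\bar\gamma^k=\varphi^k_{n_k}\circ\cdots\circ\varphi^k_1$ and $\bar\gamma=\bar\gamma^s\circ\cdots\circ\bar\gamma^1$. Then for each $k$, $$\bar\gamma(W^k)=a^k_1\cdots a^k_{n_k}+\sum_{i=1}^{n_k}a^k_1\cdots a^k_{i-1}A^k_ia^k_{i+1}\cdots a^k_{n_k}+\Gamma_k,$$ where $\Gamma_k$ is a sum of terms each of which is a scalar multiple of a path containing at least two of the factors $A^k_1,\ldots,A^k_{n_k}$.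
   Context: $kQ_H$ is the path algebra of $Q_H$ over $k$; an expression like $a^k_1\cdots A^k_i\cdots a^k_{n_k}$ denotes the path obtained by concatenation. *)

From HB Require Import structures.
From mathcomp Require Import all_boot all_order all_algebra.
Set Implicit Arguments. Unset Strict Implicit. Unset Printing Implicit Defensive.
Import GRing.Theory.
Local Open Scope ring_scope.

Inductive vertex := X of nat | Y of nat.
Definition vertex_code (v : vertex) : bool * nat :=
  match v with X i => (false, i) | Y i => (true, i) end.
Definition vertex_decode (p : bool * nat) : vertex :=
  if p.1 then Y p.2 else X p.2.
Lemma vertex_codeK : cancel vertex_code vertex_decode. Proof. by case. Qed.
HB.instance Definition _ := Equality.copy vertex (can_type vertex_codeK).

Inductive arrow := r_ of nat | l_ of nat | a_ of nat.
Definition arrow_code (e : arrow) : nat * nat :=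
  match e with r_ i => (0, i) | l_ i => (1, i) | a_ i => (2, i) end%N.
Definition arrow_decode (p : nat * nat) : arrow :=
  match p.1 with 0 => r_ p.2 | 1 => l_ p.2 | _ => a_ p.2 end%N.
Lemma arrow_codeK : cancel arrow_code arrow_decode. Proof. by case. Qed.
HB.instance Definition _ := Equality.copy arrow (can_type arrow_codeK).

Definition src (e : arrow) : vertex :=
  match e with r_ i => X i | l_ i => Y i | a_ i => X i end.
Definition tgt (e : arrow) : vertex :=
  match e with r_ i => Y i | l_ i => X i.+1 | a_ i => X i.+1 end.

(* A path: a start vertex and a (composable) list of arrows, concatenated
   left to right; the empty list gives the stationary path at the vertex. *)
Record path := Path { pstart : vertex; parrs : seq arrow }.
Definition path_code (p : path) := (pstart p, parrs p).
Definition path_decode (q : vertex * seq arrow) := Path q.1 q.2.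
Lemma path_codeK : cancel path_code path_decode. Proof. by case. Qed.
HB.instance Definition _ := Equality.copy path (can_type path_codeK).

Definition pend (p : path) : vertex := foldl (fun _ e => tgt e) (pstart p) (parrs p).
Definition pcat (p q : path) : path := Path (pstart p) (parrs p ++ parrs q).

Section PathAlgebra.
Variable K : fieldType.

Definition fsum := seq (K * path).

(* the coefficient of the path p; two formal sums denote the same element of
   kQ_H iff their coefficient functions agree *)
Definition coef (f : fsum) (p : path) : K := \sum_(t <- f | t.2 == p) t.1.

Definition fscale (c : K) (f : fsum) : fsum := [seq (c * t.1, t.2) | t <- f].

Definition fmul (f g : fsum) : fsum :=
  flatten [seq [seq (t.1 * u.1, pcat t.2 u.2) | u <- g & pend t.2 == pstart u.2]
          | t <- f].

Definition vtx (v : vertex) : fsum := [:: (1, Path v [::])].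
Definition arr (e : arrow) : fsum := [:: (1, Path (src e) [:: e])].

Definition fprod (s : seq fsum) : fsum :=
  if s is f :: s' then foldl fmul f s' else [::].

Definition subst_path (F : arrow -> fsum) (p : path) : fsum :=
  foldl (fun acc e => fmul acc (F e)) (vtx (pstart p)) (parrs p).
Definition subst (F : arrow -> fsum) (f : fsum) : fsum :=
  flatten [seq fscale t.1 (subst_path F t.2) | t <- f].

Definition AA (i : nat) : fsum := fmul (arr (r_ i)) (arr (l_ i)).

Definition phi (j : nat) : fsum -> fsum :=
  subst (fun e => if e == a_ j then arr (a_ j) ++ AA j else arr e).

Definition nk (c : nat -> nat) (k : nat) : nat := (c k.+1 - c k)%N.
Definition idx (c : nat -> nat) (k i : nat) : nat := (c k + i - 1)%N.

Definition gammak (c : nat -> nat) (k : nat) (f : fsum) : fsum :=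
  foldl (fun g i => phi (idx c k i) g) f (iota 1 (nk c k)).
Definition gamma (c : nat -> nat) (s : nat) (f : fsum) : fsum :=
  foldl (fun g k => gammak c k g) f (iota 1 s).

Definition apath (c : nat -> nat) (k : nat) : fsum :=
  fprod [seq arr (a_ (idx c k i)) | i <- iota 1 (nk c k)].
Definition Apath (c : nat -> nat) (k : nat) : fsum :=
  fprod [seq AA (idx c k i) | i <- iota 1 (nk c k)].
Definition W (c : nat -> nat) (k : nat) : fsum := apath c k ++ Apath c k.
Definition single_terms (c : nat -> nat) (k : nat) : fsum :=
  flatten [seq fprod [seq (if j == i then AA (idx c k j) else arr (a_ (idx c k j)))
                     | j <- iota 1 (nk c k)]
          | i <- iota 1 (nk c k)].

End PathAlgebra.

Definition has_factor (c : nat -> nat) (k i : nat) (p : path) : bool :=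
  infix [:: r_ (idx c k i); l_ (idx c k i)] (parrs p).

Definition two_factors (c : nat -> nat) (k : nat) (p : path) : Prop :=
  exists i1 i2 : nat, [/\ (1 <= i1)%N, (i1 < i2)%N, (i2 <= nk c k)%N,
                         has_factor c k i1 p & has_factor c k i2 p].

From Pilot Require Import Defs.
From mathcomp Require Import all_boot all_order all_algebra.
From mathcomp Require Import zify.
Set Implicit Arguments. Unset Strict Implicit. Unset Printing Implicit Defensive.
Import GRing.Theory.
Local Open Scope ring_scope.

(* Every path met in the computation lies in a single block x_{c_k} -> x_{c_{k+1}}
   and is coded by a bit sequence b: bit i chooses a_{c_k+i} (false) or
   A_{c_k+i} = r l (true).  The automorphism phi_j maps a sum of paths with
   coefficient 1 to the sum of all ways of replacing each a_j by a_j or A_j, so it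
   fixes the block-k terms unless j lies in block k, while phi^k_{m+1} turns
   "bits 0..m-1 free, the rest false" into "bits 0..m free" and fixes the all-true
   sequence.  Hence gamma(W^k) is the sum over all bit sequences of length n_k,
   plus the all-true one, and sorting them by number of true bits gives the claim
   (the all-true term has n_k >= 2 factors A and goes into Gamma_k). *)

Fixpoint is_walk (u : vertex) (w : seq arrow) : bool :=
  if w is e :: w' then (src e == u) && is_walk (tgt e) w' else true.

Definition phi_arrow_words (j : nat) (e : arrow) : seq (seq arrow) :=
  if e == a_ j then [:: [:: a_ j]; [:: r_ j; l_ j]] else [:: [:: e]].

Definition expand_step (j : nat) (ws : seq (seq arrow)) (e : arrow) :=
  [seq w ++ y | w <- ws, y <- phi_arrow_words j e].

Definition expand (j : nat) (w : seq arrow) : seq (seq arrow) :=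
  foldl (expand_step j) [:: [::]] w.

Lemma pend_cat v x y : pend (Path v (x ++ y)) = pend (Path (pend (Path v x)) y).
Proof. by rewrite /pend /= foldl_cat. Qed.

Lemma pend_phi_arrow_words j e y :
  y \in phi_arrow_words j e -> pend (Path (src e) y) = tgt e.
Proof.
rewrite /phi_arrow_words; case: eqP => [->|_]; rewrite !inE; last by move/eqP->.
by case/orP => /eqP->.
Qed.

Lemma expand_stepE j ws e : e != a_ j -> expand_step j ws e = [seq w ++ [:: e] | w <- ws].
Proof.
move=> ne_e; rewrite /expand_step /phi_arrow_words (negbTE ne_e).
by elim: ws => //= w ws ->.
Qed.

Lemma foldl_expand_step_free j w ws : a_ j \notin w ->
  foldl (expand_step j) ws w = [seq v ++ w | v <- ws].
Proof.
elim: w ws => [|e w IHw] ws /=; first by rewrite (eq_map (@cats0 _)) map_id.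
rewrite inE negb_or eq_sym => /andP [ne_e ajNw].
rewrite IHw // expand_stepE // -map_comp.
by apply: eq_map => v /=; rewrite -catA.
Qed.

Lemma expand_free j w : a_ j \notin w -> expand j w = [:: w].
Proof. by move=> ajNw; rewrite /expand foldl_expand_step_free. Qed.

Lemma expand_once j x y : a_ j \notin x -> a_ j \notin y ->
  expand j (x ++ a_ j :: y) = [:: x ++ a_ j :: y; x ++ r_ j :: l_ j :: y].
Proof.
move=> ajNx ajNy; rewrite /expand foldl_cat (foldl_expand_step_free _ ajNx) /=.
by rewrite (foldl_expand_step_free _ ajNy) /expand_step /phi_arrow_words eqxx /= -!catA.
Qed.

Fixpoint block_word (j0 : nat) (bs : seq bool) : seq arrow :=
  if bs is b :: bs' then
    (if b then [:: r_ j0; l_ j0] else [:: a_ j0]) ++ block_word j0.+1 bs'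
  else [::].

Lemma block_word_cat j0 b1 b2 :
  block_word j0 (b1 ++ b2) = block_word j0 b1 ++ block_word (j0 + size b1) b2.
Proof.
elim: b1 j0 => [|b b1 IHb] j0 /=; first by rewrite addn0.
by rewrite IHb -catA addSnnS.
Qed.

Definition arrow_index (e : arrow) : nat :=
  match e with r_ i | l_ i | a_ i => i end.

Lemma arrow_index_block_word e j0 bs :
  e \in block_word j0 bs -> (j0 <= arrow_index e < j0 + size bs)%N.
Proof.
elim: bs j0 => [|b bs IHbs] j0 //=; rewrite mem_cat => /orP [e_b|/IHbs]; last lia.
have -> : arrow_index e = j0.
  by case: b e_b; rewrite !inE ?orbF; [case/orP|]; move/eqP->.
lia.
Qed.

Lemma a_notin_block_word j j0 bs : ((j < j0) || (j0 + size bs <= j))%N ->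
  a_ j \notin block_word j0 bs.
Proof. by move=> j_out; apply/negP => /arrow_index_block_word /=; lia. Qed.

Lemma a_notin_block_word_true j j0 m : a_ j \notin block_word j0 (nseq m true).
Proof. by elim: m j0 => [|m IHm] j0 //=; rewrite !inE IHm. Qed.

Lemma is_walk_block_word j0 bs : is_walk (X j0) (block_word j0 bs).
Proof. by elim: bs j0 => [|b bs IHbs] j0 //=; case: b; rewrite /= !eqxx IHbs. Qed.

Lemma pend_block_word j0 bs : pend (Path (X j0) (block_word j0 bs)) = X (j0 + size bs).
Proof.
elim: bs j0 => [|b bs IHbs] j0 /=; first by rewrite addn0.
by rewrite pend_cat; case: b; rewrite IHbs addSnnS.
Qed.

Lemma has_factor_block_word c k b q : (q < size b)%N -> nth false b q ->
  has_factor c k q.+1 (Path (X (c k)) (block_word (c k) b)).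
Proof.
move=> q_lt bq; rewrite /has_factor /=.
have -> : idx c k q.+1 = (c k + q)%N by rewrite /idx addnS subn1.
rewrite -(cat_take_drop q b) (drop_nth false q_lt) bq block_word_cat size_take q_lt.
exact: infix_infix.
Qed.

(* All bit sequences of length m, in the order in which phi generates them. *)
Fixpoint bitseqs (m : nat) : seq (seq bool) :=
  if m is m'.+1 then flatten [seq [:: rcons b false; rcons b true] | b <- bitseqs m']
  else [:: [::]].

Lemma size_bitseqs m b : b \in bitseqs m -> size b = m.
Proof.
elim: m b => [|m IHm] b /=; first by rewrite inE => /eqP->.
by case/flatten_mapP => b' /IHm <-; rewrite !inE => /orP [] /eqP->; rewrite size_rcons.
Qed.

(* The codes of the terms of W^k after the first m maps of its block. *)
Definition stage (N m : nat) : seq (seq bool) :=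
  [seq b ++ nseq (N - m) false | b <- bitseqs m] ++ [:: nseq N true].

Lemma size_stage N m b : (m <= N)%N -> b \in stage N m -> size b = N.
Proof.
move=> le_mN; rewrite mem_cat inE => /orP [/mapP [b' /size_bitseqs b'_size ->]|/eqP->].
  by rewrite size_cat size_nseq b'_size subnKC.
by rewrite size_nseq.
Qed.

Lemma expand_stage N j0 m : (m < N)%N ->
  flatten [seq expand (j0 + m) w | w <- map (block_word j0) (stage N m)]
  = map (block_word j0) (stage N m.+1).
Proof.
move=> lt_mN; rewrite /stage !map_cat flatten_cat /= expand_free ?a_notin_block_word_true //.
congr (_ ++ _); rewrite -!map_comp map_flatten -map_comp; congr flatten.
have -> : (N - m = (N - m.+1).+1)%N by rewrite subnSK.
apply/eq_in_map => b /size_bitseqs b_size /=.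
rewrite block_word_cat b_size /= expand_once; last 2 first.
- by apply: a_notin_block_word; rewrite b_size leqnn orbT.
- by apply: a_notin_block_word; rewrite ltnSn.
by rewrite -!cats1 -!catA /= !(block_word_cat j0 b) b_size.
Qed.

Definition unit_bitseqs (N : nat) : seq (seq bool) :=
  [seq [seq j == i | j <- iota 1 N] | i <- iota 1 N].

Lemma map_constE (T : Type) (b : bool) (s : seq T) : [seq b | _ <- s] = nseq (size s) b.
Proof. by elim: s => //= x s ->. Qed.

Lemma unit_bitseqsS N :
  unit_bitseqs N.+1 = map (rcons^~ false) (unit_bitseqs N) ++ [:: rcons (nseq N false) true].
Proof.
rewrite /unit_bitseqs -[N.+1]addn1 iotaD map_cat /= add1n; congr (_ ++ _).
  rewrite -[RHS]map_comp; apply: (iffLR (eq_in_map _ _ _)) => i.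
  rewrite mem_iota => i_le /=.
  by rewrite map_cat /= -cats1; congr (_ ++ [:: _]); apply/eqP; lia.
rewrite map_cat /= eqxx -cats1 -[in nseq _ _](size_iota 1 N) -map_constE.
congr [:: _ ++ _]; apply: (iffLR (eq_in_map _ _ _)) => j.
by rewrite mem_iota => j_le; apply/eqP; lia.
Qed.

Lemma count_rcons b x : count id (rcons b x) = (count id b + x)%N.
Proof. by rewrite -cats1 count_cat /= addn0. Qed.

Lemma nseqS_rcons (T : Type) m (x : T) : nseq m.+1 x = rcons (nseq m x) x.
Proof. by elim: m => //= m <-. Qed.

Lemma perm_filter_bitseqsS P m :
  perm_eq (filter P (bitseqs m.+1))
    (map (rcons^~ false) (filter (preim (rcons^~ false) P) (bitseqs m)) ++
     map (rcons^~ true) (filter (preim (rcons^~ true) P) (bitseqs m))).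
Proof.
rewrite /= -!filter_map -filter_cat; apply: perm_filter.
elim: (bitseqs m) => //= b L IHL.
by rewrite perm_cons perm_sym -cat1s perm_catCA /= perm_cons perm_sym.
Qed.

Lemma perm_bitseqs_count0 m :
  perm_eq (filter (fun b => count id b == 0)%N (bitseqs m)) [:: nseq m false].
Proof.
elim: m => [|m IHm] //; apply: perm_trans (perm_filter_bitseqsS _ _) _.
rewrite (@eq_filter _ (preim (rcons^~ true) _) pred0); last first.
  by move=> b /=; rewrite count_rcons addn1.
rewrite filter_pred0 cats0.
rewrite (@eq_filter _ (preim (rcons^~ false) _) (fun b => count id b == 0)%N).
  by rewrite nseqS_rcons; apply: (perm_map _ IHm).
by move=> b /=; rewrite count_rcons addn0.
Qed.

Lemma perm_bitseqs_count_le1 m :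
  perm_eq (filter (fun b => count id b <= 1)%N (bitseqs m)) (nseq m false :: unit_bitseqs m).
Proof.
elim: m => [|m IHm] //; apply: perm_trans (perm_filter_bitseqsS _ _) _.
rewrite (@eq_filter _ (preim (rcons^~ true) _) (fun b => count id b == 0)%N); last first.
  by move=> b /=; rewrite count_rcons addn1 ltnS leqn0.
rewrite (@eq_filter _ (preim (rcons^~ false) _) (fun b => count id b <= 1)%N); last first.
  by move=> b /=; rewrite count_rcons addn0.
rewrite unit_bitseqsS nseqS_rcons -cat1s catA.
apply: perm_cat; last exact: (perm_map _ (perm_bitseqs_count0 m)).
by rewrite cat1s; apply: (perm_map _ IHm).
Qed.

Lemma perm_stage_full N : (2 <= N)%N ->
  perm_eq (stage N N)
    (nseq N false :: unit_bitseqs N ++ filter (fun b => 1 < count id b)%N (stage N N)).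
Proof.
move=> N_ge2; set P := (fun b : seq bool => 1 < count id b)%N.
rewrite -cat1s catA -(perm_filterC P) perm_catC perm_cat2r.
rewrite /stage subnn filter_cat /= /P count_nseq mul1n N_ge2 /= cats0.
rewrite (eq_map (@cats0 _)) map_id (@eq_filter _ _ (fun b => count id b <= 1)%N).
  exact: perm_bitseqs_count_le1.
by move=> b /=; rewrite -leqNgt.
Qed.

Lemma two_true_bits b : (1 < count id b)%N ->
  exists q1 q2, [/\ (q1 < q2)%N, (q2 < size b)%N, nth false b q1 & nth false b q2].
Proof.
elim: b => [|[] b IHb] //=.
  rewrite add1n ltnS -has_count => /hasP [y y_b /= y_true].
  move: y_b; rewrite y_true => /(nthP false) [q q_lt bq].
  by exists 0%N, q.+1; split => //=; rewrite bq.
by move=> /IHb [q1 [q2 [? ? ? ?]]]; exists q1.+1, q2.+1.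
Qed.

Lemma leq_c_mono s c : (forall k, (1 <= k <= s)%N -> (c k < c k.+1)%N) ->
  forall a b, (1 <= a)%N -> (a <= b)%N -> (b <= s.+1)%N -> (c a <= c b)%N.
Proof.
move=> c_incr a b a_ge1; elim: b => [|b IHb] le_ab b_le; first lia.
case: (ltngtP a b.+1) => [lt_ab|//|->//]; have := c_incr b; have := IHb; lia.
Qed.

Section PathAlgebra.
Variable K : fieldType.

Definition unit_sum (v : vertex) (ws : seq (seq arrow)) : fsum K :=
  [seq (1, Path v w) | w <- ws].

Definition block_sum (j0 : nat) (bss : seq (seq bool)) : fsum K :=
  unit_sum (X j0) (map (block_word j0) bss).

(* [phi j] is [subst (phi_arrow j)] up to conversion. *)
Definition phi_arrow (j : nat) (e : arrow) : fsum K :=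
  if e == a_ j then arr K (a_ j) ++ AA K j else arr K e.

Lemma AAE j : AA K j = [:: (1, Path (X j) [:: r_ j; l_ j])].
Proof. by rewrite /AA /arr /fmul /= /pend /= eqxx /= mulr1. Qed.

Lemma phi_arrowE j e : phi_arrow j e = unit_sum (src e) (phi_arrow_words j e).
Proof. by rewrite /phi_arrow /phi_arrow_words; case: eqP => [->|_]; rewrite ?AAE. Qed.

Lemma fmul_unit_sum_phi_arrow j v u ws e : src e = u ->
  (forall w, w \in ws -> pend (Path v w) = u) ->
  fmul (unit_sum v ws) (phi_arrow j e) = unit_sum v (expand_step j ws e).
Proof.
move=> src_e ws_end; rewrite phi_arrowE.
elim: ws ws_end => [|w ws IHws] ws_end //.
rewrite [LHS]/fmul map_cons /= -/(fmul _ _) IHws => [|x x_ws]; last first.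
  by apply: ws_end; rewrite inE x_ws orbT.
rewrite /unit_sum /expand_step /= map_cat; congr (_ ++ _).
rewrite ws_end ?mem_head // -src_e.
by elim: (phi_arrow_words j e) => //= y ys IH; rewrite eqxx /= mulr1 IH.
Qed.

Lemma foldl_fmul_phi_arrow j v w : forall u ws, is_walk u w ->
  (forall x, x \in ws -> pend (Path v x) = u) ->
  foldl (fun acc e => fmul acc (phi_arrow j e)) (unit_sum v ws) w
  = unit_sum v (foldl (expand_step j) ws w).
Proof.
elim: w => [|e w IHw] u ws //= /andP [/eqP src_e w_walk] ws_end.
rewrite (fmul_unit_sum_phi_arrow _ src_e ws_end); apply: (IHw (tgt e)) => //.
move=> x /allpairsP [[y z] [/= y_ws z_e ->]].
by rewrite pend_cat ws_end // -src_e (pend_phi_arrow_words z_e).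
Qed.

Lemma phi_unit_sum j v ws : (forall w, w \in ws -> is_walk v w) ->
  phi j (unit_sum v ws) = unit_sum v (flatten [seq expand j w | w <- ws]).
Proof.
elim: ws => [|w ws IHws] ws_walk //.
change (phi j (unit_sum v (w :: ws))) with
  (fscale 1 (subst_path (phi_arrow j) (Path v w)) ++ phi j (unit_sum v ws)).
rewrite IHws => [|x x_ws]; last by apply: ws_walk; rewrite inE x_ws orbT.
rewrite /= /unit_sum map_cat; congr (_ ++ _).
rewrite /subst_path /= /vtx -[[:: _]]/(unit_sum v [:: [::]]).
rewrite (foldl_fmul_phi_arrow j (u := v)) ?ws_walk ?mem_head //; last first.
  by move=> x; rewrite inE => /eqP->.
by rewrite /fscale -map_comp; apply: eq_map => x /=; rewrite mul1r.
Qed.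

Lemma phi_block_sum j j0 bss :
  phi j (block_sum j0 bss) =
  unit_sum (X j0) (flatten [seq expand j w | w <- map (block_word j0) bss]).
Proof. by apply: phi_unit_sum => _ /mapP [b _ ->]; apply: is_walk_block_word. Qed.

Lemma phi_stage_inside N j0 m : (m < N)%N ->
  phi (j0 + m) (block_sum j0 (stage N m)) = block_sum j0 (stage N m.+1).
Proof. by move=> lt_mN; rewrite phi_block_sum expand_stage. Qed.

Lemma phi_stage_outside N j0 m j : (m <= N)%N -> ((j < j0) || (j0 + N <= j))%N ->
  phi j (block_sum j0 (stage N m)) = block_sum j0 (stage N m).
Proof.
move=> le_mN j_out.
have expand_fixed : {in stage N m, expand j \o block_word j0 =1 fun b => [:: block_word j0 b]}.
  move=> b b_stage /=.
  by rewrite expand_free // a_notin_block_word // (size_stage le_mN b_stage).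
by rewrite phi_block_sum -map_comp (iffLR (eq_in_map _ _ _) expand_fixed) flatten_map1.
Qed.

Lemma foldl_phi_stage_outside (h : nat -> nat) l N j0 m : (m <= N)%N ->
  (forall i, i \in l -> ((h i < j0) || (j0 + N <= h i))%N) ->
  foldl (fun f i => phi (h i) f) (block_sum j0 (stage N m)) l = block_sum j0 (stage N m).
Proof.
move=> le_mN; elim: l => [|i l IHl] //= h_out.
rewrite phi_stage_outside ?h_out ?mem_head // IHl // => i' i'_l.
by apply: h_out; rewrite inE i'_l orbT.
Qed.

Lemma foldl_phi_stage N j0 m r : (m + r = N)%N ->
  foldl (fun f i => phi (j0 + i - 1) f) (block_sum j0 (stage N m)) (iota m.+1 r)
  = block_sum j0 (stage N N).
Proof.
elim: r m => [|r IHr] m /= mr_N; first by rewrite -mr_N addn0.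
rewrite addnS subn1 /= phi_stage_inside ?IHr //; lia.
Qed.

Lemma gammak_stage c k : gammak c k (block_sum (c k) (stage (nk c k) 0)) =
  block_sum (c k) (stage (nk c k) (nk c k)).
Proof. exact: foldl_phi_stage. Qed.

Lemma foldl_gammak_outside c l N j0 m : (m <= N)%N ->
  (forall k, k \in l -> forall i, i \in iota 1 (nk c k) ->
     ((idx c k i < j0) || (j0 + N <= idx c k i))%N) ->
  foldl (fun f k => gammak c k f) (block_sum j0 (stage N m)) l = block_sum j0 (stage N m).
Proof.
move=> le_mN; elim: l => [|k l IHl] //= l_out.
have -> : gammak c k (block_sum j0 (stage N m)) = block_sum j0 (stage N m).
  exact: foldl_phi_stage_outside (l_out _ (mem_head _ _)).
by apply: IHl => k' k'_l; apply: l_out; rewrite inE k'_l orbT.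
Qed.

Lemma gamma_stage s c : (forall k, (1 <= k <= s)%N -> (c k < c k.+1)%N) ->
  forall k, (1 <= k <= s)%N ->
  gamma c s (block_sum (c k) (stage (nk c k) 0)) = block_sum (c k) (stage (nk c k) (nk c k)).
Proof.
move=> c_incr k k_s; have c_mono := leq_c_mono c_incr; rewrite /gamma.
have -> : iota 1 s = iota 1 k.-1 ++ k :: iota k.+1 (s - k).
  rewrite -{1}(_ : (k.-1 + (s - k).+1)%N = s); last lia.
  rewrite iotaD (_ : (1 + k.-1)%N = k) //; lia.
rewrite foldl_cat foldl_gammak_outside //=; last first.
  move=> k' /[!mem_iota] k'_lt i /[!mem_iota] i_le.
  have := c_mono k'.+1 k; have := c_incr k'; rewrite /idx /nk in i_le *; lia.
rewrite gammak_stage foldl_gammak_outside // => k' /[!mem_iota] k'_gt i /[!mem_iota] i_le.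
have := c_mono k.+1 k'; have := c_incr k; rewrite /idx /nk in i_le *; lia.
Qed.

Lemma fmul_block_factor v w j b : pend (Path v w) = X j ->
  fmul (unit_sum v [:: w]) (if b then AA K j else arr K (a_ j))
  = unit_sum v [:: w ++ block_word j [:: b]].
Proof. by move=> w_end; case: b; rewrite ?AAE /fmul /= w_end eqxx /= mulr1 ?cats0. Qed.

Lemma foldl_fmul_block_factors v w j0 (f : nat -> bool) m r : (1 <= m)%N ->
  pend (Path v w) = X (j0 + m - 1) ->
  foldl (@fmul K) (unit_sum v [:: w])
    [seq (if f i then AA K (j0 + i - 1) else arr K (a_ (j0 + i - 1))) | i <- iota m r]
  = unit_sum v [:: w ++ block_word (j0 + m - 1) [seq f i | i <- iota m r]].
Proof.
elim: r m w => [|r IHr] m w m_ge1 w_end /=; first by rewrite cats0.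
rewrite fmul_block_factor // IHr //; last first.
  by rewrite pend_cat w_end pend_block_word /=; congr X; lia.
by rewrite -catA /= cats0 (_ : (j0 + m.+1 - 1 = (j0 + m - 1).+1)%N) //; lia.
Qed.

Lemma fprod_block_factors j0 N (f : nat -> bool) : (0 < N)%N ->
  Defs.fprod [seq (if f i then AA K (j0 + i - 1) else arr K (a_ (j0 + i - 1))) | i <- iota 1 N]
  = block_sum j0 [:: [seq f i | i <- iota 1 N]].
Proof.
case: N => [|N] // _ /=; rewrite addnK.
have -> : (if f 1%N then AA K j0 else arr K (a_ j0))
          = unit_sum (X j0) [:: [::] ++ block_word j0 [:: f 1%N]].
  by case: (f 1%N); rewrite ?AAE.
rewrite foldl_fmul_block_factors //; last by rewrite pend_block_word /=; congr X; lia.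
by rewrite /= cats0 (_ : (j0 + 2 - 1 = j0.+1)%N) //; lia.
Qed.

Lemma apath_block_sum c k : (0 < nk c k)%N ->
  apath K c k = block_sum (c k) [:: nseq (nk c k) false].
Proof.
move=> nk_gt0; rewrite /apath /idx (fprod_block_factors _ (fun=> false)) //.
by rewrite map_constE size_iota.
Qed.

Lemma Apath_block_sum c k : (0 < nk c k)%N ->
  Apath K c k = block_sum (c k) [:: nseq (nk c k) true].
Proof.
move=> nk_gt0; rewrite /Apath /idx (fprod_block_factors _ (fun=> true)) //.
by rewrite map_constE size_iota.
Qed.

Lemma W_block_sum c k : (0 < nk c k)%N -> W K c k = block_sum (c k) (stage (nk c k) 0).
Proof.
by move=> nk_gt0; rewrite /W apath_block_sum // Apath_block_sum // /stage /= subn0.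
Qed.

Lemma single_terms_block_sum c k : (0 < nk c k)%N ->
  single_terms K c k = block_sum (c k) (unit_bitseqs (nk c k)).
Proof.
move=> nk_gt0; rewrite /single_terms /idx.
rewrite (eq_map (fun i => fprod_block_factors (c k) (fun j => j == i) nk_gt0)).
by rewrite flatten_map1 /block_sum /unit_sum /unit_bitseqs -!map_comp.
Qed.

Lemma coef_perm (f g : fsum K) : perm_eq f g -> coef f =1 coef g.
Proof. by move=> fg p; apply: perm_big. Qed.

End PathAlgebra.

Theorem mainTheorem6 (K : fieldType) (n s : nat) (c : nat -> nat)
    (hn : (1 <= n)%N)
    (hc1 : c 1%N = 1%N) (hcs : c s.+1 = n.+1)
    (hinc : forall k : nat, (1 <= k <= s)%N -> (c k < c k.+1)%N)
    (hgap : forall k : nat, (1 <= k <= s)%N -> (2 <= nk c k)%N) :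
  forall k : nat, (1 <= k <= s)%N ->
    exists Gamma : fsum K,
      (forall t, t \in Gamma -> two_factors c k t.2) /\
      coef (gamma c s (W K c k)) =1
        coef (apath K c k ++ single_terms K c k ++ Gamma).
Proof.
move=> k k_s; have nk_ge2 := hgap k k_s; have nk_gt0 := ltnW nk_ge2.
set N := nk c k; set P := fun b : seq bool => (1 < count id b)%N.
exists (block_sum K (c k) (filter P (stage N N))); split.
  move=> _ /mapP [_ /mapP [b /[!mem_filter] /andP [b_P b_stage] ->] ->] /=.
  have [q1 [q2 [lt_q12 q2_lt bq1 bq2]]] := two_true_bits b_P.
  exists q1.+1, q2.+1; rewrite -/N -(size_stage (leqnn N) b_stage).
  by split => //; apply: has_factor_block_word => //; apply: ltn_trans q2_lt.
rewrite W_block_sum // gamma_stage // apath_block_sum // single_terms_block_sum //.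
rewrite /block_sum /unit_sum -!map_cat.
by apply/coef_perm/perm_map/perm_map/perm_stage_full.
Qed.
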